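(* Let $\mathcal{C}$ be a division Cayley algebra over a field $\mathbb{F}$. Then every local automorphism of $\mathcal{C}$ is a $2$-local automorphism, and hence the set of local automorphisms of $\mathcal{C}$ equals the set of $2$-local automorphisms of $\mathcal{C}$.
   Context: A Cayley (octonion) algebra over $\mathbb{F}$ is a unital nonassociative algebra $\mathcal{C}$ of dimension $8$ over $\mathbb{F}$ endowed with a quadratic form $\mathrm{n}:\mathcal{C}\to\mathbb{F}$ (the norm) such that $\mathrm{n}(xy)=\mathrm{n}(x)\mathrm{n}(y)$ for all $x,y$ and whose polar form $\mathrm{n}(x,y)=\mathrm{n}(x+y)-\mathrm{n}(x)-\mathrm{n}(y)$ is nondegenerate; it is a division Cayley algebra if it is a division algebra (equivalently $\mathrm{n}$ is anisotropic). A linear map $\psi:\mathcal{C}\to\mathcal{C}$ is a local automorphism if for every $x\in\mathcal{C}$ there is an automorphism $\varphi_x$ of $\mathcal{C}$ with $\psi(x)=\varphi_x(x)$. A map $\Delta:\mathcal{C}\to\mathcal{C}$ (not assumed linear) is a $2$-local automorphism if for every pair $x,y\in\mathcal{C}$ there is an automorphism $\varphi_{x,y}$ of $\mathcal{C}$ with $\Delta(x)=\varphi_{x,y}(x)$ and $\Delta(y)=\varphi_{x,y}(y)$. *)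

From HB Require Import structures.
From mathcomp Require Import all_boot all_order all_algebra.
Set Implicit Arguments. Unset Strict Implicit. Unset Printing Implicit Defensive.
Import GRing.Theory.
Local Open Scope ring_scope.

(* A (nonassociative) algebra structure on a finite-dimensional F-vector
   space V is given by a multiplication mul : V -> V -> V. *)

Definition bilinear_mul (F : fieldType) (V : vectType F) (mul : V -> V -> V) : Prop :=
  (forall (a : F) (x y z : V), mul (a *: x + y) z = a *: mul x z + mul y z) /\
  (forall (a : F) (x y z : V), mul z (a *: x + y) = a *: mul z x + mul z y).

Definition polar (F : fieldType) (V : vectType F) (n : V -> F) (x y : V) : F :=
  n (x + y) - n x - n y.

Definition quadratic_form (F : fieldType) (V : vectType F) (n : V -> F) : Prop :=
  (forall (a : F) (x : V), n (a *: x) = a ^+ 2 * n x) /\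
  (forall (a : F) (x y z : V), polar n (a *: x + y) z = a * polar n x z + polar n y z) /\
  (forall (a : F) (x y z : V), polar n z (a *: x + y) = a * polar n z x + polar n z y).

Definition nondegenerate_polar (F : fieldType) (V : vectType F) (n : V -> F) : Prop :=
  forall x : V, (forall y : V, polar n x y = 0) -> x = 0.

Definition cayley_algebra (F : fieldType) (V : vectType F)
    (mul : V -> V -> V) (one : V) (n : V -> F) : Prop :=
  [/\ \dim {: V} = 8%N /\ bilinear_mul mul,
      (forall x : V, mul one x = x /\ mul x one = x),
      quadratic_form n,
      (forall x y : V, n (mul x y) = n x * n y)
    & nondegenerate_polar n].

Definition division_algebra (F : fieldType) (V : vectType F) (mul : V -> V -> V) : Prop :=
  forall a : V, a != 0 -> bijective (mul a) /\ bijective (fun x => mul x a).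

Definition division_cayley_algebra (F : fieldType) (V : vectType F)
    (mul : V -> V -> V) (one : V) (n : V -> F) : Prop :=
  cayley_algebra mul one n /\ division_algebra mul.

Definition linear_map (F : fieldType) (V : vectType F) (f : V -> V) : Prop :=
  forall (a : F) (x y : V), f (a *: x + y) = a *: f x + f y.

Definition automorphism (F : fieldType) (V : vectType F) (mul : V -> V -> V)
    (phi : V -> V) : Prop :=
  [/\ linear_map phi, bijective phi & forall x y : V, phi (mul x y) = mul (phi x) (phi y)].

Definition local_automorphism (F : fieldType) (V : vectType F) (mul : V -> V -> V)
    (psi : V -> V) : Prop :=
  linear_map psi /\
  forall x : V, exists phi : V -> V, automorphism mul phi /\ psi x = phi x.

Definition two_local_automorphism (F : fieldType) (V : vectType F) (mul : V -> V -> V)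
    (D : V -> V) : Prop :=
  forall x y : V, exists phi : V -> V,
    [/\ automorphism mul phi, D x = phi x & D y = phi y].

From HB Require Import structures.
From mathcomp Require Import all_boot all_order all_algebra.
From mathcomp Require Import ring.
Set Implicit Arguments. Unset Strict Implicit. Unset Printing Implicit Defensive.
Import GRing.Theory.
Local Open Scope ring_scope.

(* A local automorphism psi is linear and preserves one, the norm, the trace
   and the polar form.  Automorphisms are produced from basic triples (w, v, u):
   w generates a nondegenerate quadratic subalgebra F 1 + F w, and doubling it by
   v and then by u (Cayley-Dickson) yields a basis of the 8-dimensional algebra.
   Two basic triples with the same trace and norms are exchanged by the linear
   map matching these bases, which is multiplicative by the doubling formula.
   Given x and y we build a basic triple from them: from x and the component of
   y orthogonal to 1 and x when disc x != 0; otherwise we are in characteristic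
   2 with x, y of trace zero, and use x ** y and x when '[x, y] != 0, or an
   auxiliary w orthogonal to x, y and x ** y when '[x, y] = 0.  The matching
   triple on the side of psi x and psi y is obtained from Witt's extension
   theorem for the anisotropic norm.  Conversely, a 2-local automorphism
   preserves the anisotropic norm and its polar form, hence is linear. *)

Lemma self_add_eq0 (M : zmodType) (a : M) : a = a + a -> a = 0.
Proof. by move/(congr1 (fun z => z - a)); rewrite subrr addrK. Qed.

Section LinearMap.
Variables (F : fieldType) (V : vectType F) (f : V -> V).
Hypothesis f_lin : linear_map f.

Lemma linear_map0 : f 0 = 0.
Proof. by apply: self_add_eq0; have := f_lin 1 0 0; rewrite !scale1r addr0. Qed.
Lemma linear_mapD x y : f (x + y) = f x + f y.
Proof. by have := f_lin 1 x y; rewrite !scale1r. Qed.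
Lemma linear_mapZ a x : f (a *: x) = a *: f x.
Proof. by have := f_lin a x 0; rewrite !addr0 linear_map0 addr0. Qed.
Lemma linear_mapN x : f (- x) = - f x.
Proof. by rewrite -scaleN1r linear_mapZ scaleN1r. Qed.
Lemma linear_mapB x y : f (x - y) = f x - f y.
Proof. by rewrite linear_mapD linear_mapN. Qed.

End LinearMap.

Lemma basis_lfun (K : fieldType) (W : vectType K) (X Y : seq W) :
  free X -> free Y -> size X = size Y -> <<X>>%VS = fullv ->
  exists f : 'End(W), bijective f /\ map f X = Y.
Proof.
move=> free_X free_Y size_XY span_X; have [g gXY] := linear_of_free X Y.
have fXY : map (linfun g) X = Y by rewrite (eq_map (lfunE g)) gXY.
have img_f : limg (linfun g) = fullv.
  apply/eqP; rewrite eqEdim subvf -span_X limg_span fXY.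
  by rewrite (eqP free_Y) (eqP free_X) size_XY leqnn.
have ker_f : lker (linfun g) == 0%VS.
  have := limg_ker_dim (linfun g) fullv; rewrite img_f capfv -{2}[\dim fullv]add0n.
  by move/addIn/eqP; rewrite dimv_eq0.
exists (linfun g); split => //.
by exists (linfun g)^-1%VF; [apply: lker0_lfunK|apply: lker0_lfunVK].
Qed.

Lemma span2_exchange (K : fieldType) (W : vectType K) (e x y : W) :
  x \notin <[e]>%VS -> y \notin <<[:: e; x]>>%VS -> x \notin <<[:: e; y]>>%VS.
Proof.
move=> x_notin; apply: contra; rewrite span_cons span_seq1.
move=> /memv_addP[_ /vlineP[a ->] [_ /vlineP[b ->]]] x_eq.
have [b0|b_neq0] := eqVneq b 0.
  by move/negP: x_notin; case; rewrite x_eq b0 scale0r addr0 memvZ ?memv_line.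
rewrite -[_ \in _]orFb -(negbTE b_neq0) -rpredZeq (_ : b *: y = x - a *: e).
  by rewrite memvB ?memvZ ?memv_span ?inE ?eqxx ?orbT.
by rewrite x_eq addrC addKr.
Qed.

Section CompositionAlgebra.
Variables (F : fieldType) (V : vectType F) (mul : V -> V -> V) (one : V) (nrm : V -> F).
Hypothesis mul_bilinear : bilinear_mul mul.
Hypothesis mul1 : forall x, mul one x = x /\ mul x one = x.
Hypothesis nrm_quadratic : quadratic_form nrm.
Hypothesis nrmM : forall x y, nrm (mul x y) = nrm x * nrm y.
Hypothesis polar_nondeg : nondegenerate_polar nrm.
Hypothesis one_neq0 : one != 0.

Local Notation "x ** y" := (mul x y) (at level 40, left associativity).
Local Notation "'[ x , y ]" := (polar nrm x y).

Lemma mul1x x : one ** x = x. Proof. by case: (mul1 x). Qed.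
Lemma mulx1 x : x ** one = x. Proof. by case: (mul1 x). Qed.

Lemma mul0x x : 0 ** x = 0.
Proof.
by apply: self_add_eq0; case: mul_bilinear => /(_ 1 0 0 x); rewrite !scale1r addr0.
Qed.
Lemma mulx0 x : x ** 0 = 0.
Proof.
by apply: self_add_eq0; case: mul_bilinear => _ /(_ 1 0 0 x); rewrite !scale1r addr0.
Qed.
Lemma mulDx x y z : (x + y) ** z = x ** z + y ** z.
Proof. by case: mul_bilinear => /(_ 1 x y z); rewrite !scale1r. Qed.
Lemma mulxD x y z : z ** (x + y) = z ** x + z ** y.
Proof. by case: mul_bilinear => _ /(_ 1 x y z); rewrite !scale1r. Qed.
Lemma mulZx a x z : (a *: x) ** z = a *: (x ** z).
Proof. by case: mul_bilinear => /(_ a x 0 z); rewrite !addr0 mul0x addr0. Qed.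
Lemma mulxZ a x z : z ** (a *: x) = a *: (z ** x).
Proof. by case: mul_bilinear => _ /(_ a x 0 z); rewrite !addr0 mulx0 addr0. Qed.
Lemma mulNx x z : (- x) ** z = - (x ** z).
Proof. by rewrite -scaleN1r mulZx scaleN1r. Qed.
Lemma mulxN x z : z ** (- x) = - (z ** x).
Proof. by rewrite -scaleN1r mulxZ scaleN1r. Qed.
Lemma mulBx x y z : (x - y) ** z = x ** z - y ** z.
Proof. by rewrite mulDx mulNx. Qed.
Lemma mulxB x y z : z ** (x - y) = z ** x - z ** y.
Proof. by rewrite mulxD mulxN. Qed.

Lemma one_neq0_dim : (0 < \dim {: V})%N -> one != 0.
Proof.
rewrite lt0n dimv_eq0; apply: contraNneq => one0; apply/eqP/vspaceP => x.
by rewrite memvf memv0 -(mul1x x) one0 mul0x eqxx.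
Qed.

Lemma nrmZ a x : nrm (a *: x) = a ^+ 2 * nrm x. Proof. by case: nrm_quadratic. Qed.
Lemma nrm0 : nrm 0 = 0. Proof. by rewrite -(scale0r 0) nrmZ expr2 !mul0r. Qed.
Lemma nrmN x : nrm (- x) = nrm x. Proof. by rewrite -scaleN1r nrmZ sqrrN expr1n mul1r. Qed.
Lemma nrmD x y : nrm (x + y) = nrm x + nrm y + '[x, y].
Proof. rewrite /polar; ring. Qed.

Lemma polarC x y : '[x, y] = '[y, x].
Proof. by rewrite /polar [y + x]addrC; ring. Qed.
Lemma polarDl x y z : '[x + y, z] = '[x, z] + '[y, z].
Proof. by case: nrm_quadratic => _ [/(_ 1 x y z)]; rewrite scale1r mul1r. Qed.
Lemma polarDr x y z : '[z, x + y] = '[z, x] + '[z, y].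
Proof. by rewrite polarC polarDl !(polarC z). Qed.
Lemma polar0l z : '[0, z] = 0.
Proof. by apply: self_add_eq0; rewrite -polarDl addr0. Qed.
Lemma polar0r z : '[z, 0] = 0. Proof. by rewrite polarC polar0l. Qed.
Lemma polarZl a x z : '[a *: x, z] = a * '[x, z].
Proof. by case: nrm_quadratic => _ [/(_ a x 0 z)]; rewrite !addr0 polar0l addr0. Qed.
Lemma polarZr a x z : '[z, a *: x] = a * '[z, x].
Proof. by rewrite polarC polarZl polarC. Qed.
Lemma polarNl x z : '[- x, z] = - '[x, z]. Proof. by rewrite -scaleN1r polarZl mulN1r. Qed.
Lemma polarNr x z : '[z, - x] = - '[z, x]. Proof. by rewrite polarC polarNl polarC. Qed.
Lemma polarBl x y z : '[x - y, z] = '[x, z] - '[y, z]. Proof. by rewrite polarDl polarNl. Qed.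
Lemma polarBr x y z : '[z, x - y] = '[z, x] - '[z, y]. Proof. by rewrite polarDr polarNr. Qed.
Lemma polarxx x : '[x, x] = 2 * nrm x.
Proof. by rewrite /polar -{1 2}(scale1r x) -scalerDl nrmZ; ring. Qed.

Lemma polar_inj a b : (forall z, '[a, z] = '[b, z]) -> a = b.
Proof.
move=> eq_ab; apply/eqP; rewrite -subr_eq0; apply/eqP/polar_nondeg => y.
by rewrite polarBl eq_ab subrr.
Qed.

Lemma eq_of_sub_eq (a b c d : F) : c = d -> a - b = c - d -> a = b.
Proof. by move=> -> e; apply/eqP; rewrite -subr_eq0 e subrr. Qed.

(* Identities between vectors are proved by pairing both sides with an
   arbitrary vector: by nondegeneracy they become ring identities in F. *)
Ltac polar_ring := let w := fresh "w" in apply: polar_inj => w;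
  rewrite ?(polarDl, polarBl, polarNl, polarZl, polar0l); ring.
Ltac polar_ring_using h := let w := fresh "w" in let hw := fresh "hw" in
  apply: polar_inj => w; move: (congr1 (polar nrm ^~ w) h) => /= hw;
  rewrite ?(polarDl, polarBl, polarNl, polarZl, polar0l) in hw *;
  first [apply: (eq_of_sub_eq hw); ring | apply: (eq_of_sub_eq (esym hw)); ring].

Lemma nrm1 : nrm one = 1.
Proof.
have n1sq := nrmM one one; rewrite mul1x in n1sq.
have [n1_0|n1_neq0] := eqVneq (nrm one) 0; last first.
  by apply: (mulfI n1_neq0); rewrite -n1sq mulr1.
have nrm_eq0 z : nrm z = 0 by rewrite -(mulx1 z) nrmM n1_0 mulr0.
by move/negP: one_neq0; case; apply/eqP/polar_nondeg => y; rewrite /polar !nrm_eq0 !subr0.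
Qed.

Definition tr x := '[x, one].

Lemma tr1 : tr one = 2. Proof. by rewrite /tr polarxx nrm1 mulr1. Qed.
Lemma trD x y : tr (x + y) = tr x + tr y. Proof. exact: polarDl. Qed.
Lemma trZ a x : tr (a *: x) = a * tr x. Proof. exact: polarZl. Qed.
Lemma trB x y : tr (x - y) = tr x - tr y. Proof. exact: polarBl. Qed.

Lemma polarMl x y z : '[x ** y, x ** z] = nrm x * '[y, z].
Proof.
have := nrmM x (y + z); rewrite mulxD !nrmD !nrmM => e.
by apply: (eq_of_sub_eq e); ring.
Qed.
Lemma polarMr x y z : '[y ** x, z ** x] = nrm x * '[y, z].
Proof.
have := nrmM (y + z) x; rewrite mulDx !nrmD !nrmM => e.
by apply: (eq_of_sub_eq e); ring.
Qed.
Lemma polarMl2 x w y z : '[x ** y, w ** z] + '[w ** y, x ** z] = '[x, w] * '[y, z].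
Proof.
have := polarMl (x + w) y z; rewrite !mulDx !polarDl !polarDr !polarMl nrmD => e.
by apply: (eq_of_sub_eq e); ring.
Qed.
Lemma polarMr2 x w y z : '[y ** x, z ** w] + '[y ** w, z ** x] = '[x, w] * '[y, z].
Proof.
have := polarMr (x + w) y z; rewrite !mulxD !polarDl !polarDr !polarMr nrmD => e.
by apply: (eq_of_sub_eq e); ring.
Qed.

Lemma mulxx x : x ** x = tr x *: x - nrm x *: one.
Proof.
apply: polar_inj => z; rewrite polarBl !polarZl.
have := polarMl x one z; rewrite mulx1 => e1.
have := polarMl2 x one x z; rewrite !mul1x e1 => e.
by apply: (eq_of_sub_eq e); rewrite /tr; ring.
Qed.

Fact conj_key : unit. Proof. exact: tt. Qed.
Definition conj x := locked_with conj_key (tr x *: one - x).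
Lemma conjE x : conj x = tr x *: one - x. Proof. by rewrite /conj unlock. Qed.

Lemma polar_mull x y z : '[x ** y, z] = '[y, conj x ** z].
Proof.
rewrite conjE mulBx mulZx mul1x polarBr polarZr.
have := polarMl2 x one y z; rewrite !mul1x => e.
by apply: (eq_of_sub_eq e); rewrite /tr; ring.
Qed.
Lemma polar_mulr x y z : '[y ** x, z] = '[y, z ** conj x].
Proof.
rewrite conjE mulxB mulxZ mulx1 polarBr polarZr.
have := polarMr2 x one y z; rewrite !mulx1 => e.
by apply: (eq_of_sub_eq e); rewrite /tr; ring.
Qed.

Lemma tr_conj x : tr (conj x) = tr x.
Proof. by rewrite conjE trB trZ tr1; ring. Qed.
Lemma conjK x : conj (conj x) = x.
Proof. by rewrite {1}conjE tr_conj conjE opprB addrC subrK. Qed.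
Lemma conjD x y : conj (x + y) = conj x + conj y.
Proof. rewrite !conjE trD scalerDl; polar_ring. Qed.
Lemma conjZ a x : conj (a *: x) = a *: conj x.
Proof. by rewrite !conjE trZ -scalerA scalerBr. Qed.
Lemma conjN x : conj (- x) = - conj x.
Proof. by rewrite -scaleN1r conjZ scaleN1r. Qed.
Lemma conj0 : conj 0 = 0.
Proof. by rewrite conjE /tr polar0l scale0r subr0. Qed.

Lemma mul_conjK x y : conj x ** (x ** y) = nrm x *: y.
Proof. by apply: polar_inj => z; rewrite polar_mull conjK polarMl polarZl. Qed.
Lemma mul_conjKr x y : (y ** x) ** conj x = nrm x *: y.
Proof. by apply: polar_inj => z; rewrite polar_mulr conjK polarMr polarZl. Qed.
Lemma mul_conjK2 x z y : conj x ** (z ** y) + conj z ** (x ** y) = '[x, z] *: y.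
Proof.
have e := mul_conjK (x + z) y; rewrite conjD !mulDx !mulxD !mul_conjK nrmD in e.
polar_ring_using e.
Qed.
Lemma mul_conjKr2 x z y : (y ** x) ** conj z + (y ** z) ** conj x = '[x, z] *: y.
Proof.
have e := mul_conjKr (x + z) y; rewrite conjD !mulxD !mulDx !mul_conjKr nrmD in e.
polar_ring_using e.
Qed.
Lemma mul_conjr x : x ** conj x = nrm x *: one.
Proof. by rewrite -mul_conjKr mul1x. Qed.

Lemma mul_sym x y : x ** y + y ** x = tr x *: y + tr y *: x - '[x, y] *: one.
Proof.
have e := mulxx (x + y); rewrite mulDx !mulxD !mulxx trD nrmD in e.
polar_ring_using e.
Qed.

Lemma trM x y : tr (x ** y) = tr x * tr y - '[x, y].
Proof. by rewrite /tr polar_mull mulx1 conjE polarBr polarZr -/(tr y) (polarC y). Qed.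

Lemma polar_mull_self x y : '[x, x ** y] = nrm x * tr y.
Proof. by rewrite -{1}(mulx1 x) polarMl polarC. Qed.
Lemma polar_mulr_self x y : '[y, x ** y] = nrm y * tr x.
Proof. by rewrite -{1}(mul1x y) polarMr polarC. Qed.

Lemma polar_rotate w x y : tr x = 0 -> tr y = 0 -> '[x, y] = 0 -> '[y, w ** x] = '[w, x ** y].
Proof.
move=> tr_x tr_y xy; rewrite polarC polar_mulr conjE tr_x scale0r sub0r mulxN.
have := mul_sym x y; rewrite tr_x tr_y xy !scale0r !addr0 subr0 => /eqP.
by rewrite addr_eq0 => /eqP <-.
Qed.

Lemma linear_map_conj f x : linear_map f -> f one = one -> tr (f x) = tr x ->
  f (conj x) = conj (f x).
Proof. by move=> f_lin f1 trf; rewrite !conjE (linear_mapB f_lin) (linear_mapZ f_lin) f1 trf. Qed.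

Section Automorphism.
Variables (phi : V -> V) (phi_aut : automorphism mul phi).

Lemma aut_linear : linear_map phi. Proof. by case: phi_aut. Qed.
Lemma autM x y : phi (x ** y) = phi x ** phi y. Proof. by case: phi_aut. Qed.

Lemma aut1 : phi one = one.
Proof.
case: phi_aut => _ [g _ phiK] phiM.
have phi1x z : phi one ** z = z by rewrite -(phiK z) -phiM mul1x.
by rewrite -(mulx1 (phi one)) phi1x.
Qed.

(* phi x is a root of the quadratic polynomials of both x and phi x; if these
   differed, phi x, hence x, would be a scalar. *)
Lemma aut_tr_nrm x : tr (phi x) = tr x /\ nrm (phi x) = nrm x.
Proof.
have lin := aut_linear.
have e : (tr (phi x) - tr x) *: phi x = (nrm (phi x) - nrm x) *: one.
  have e := mulxx (phi x).
  rewrite -autM mulxx (linear_mapB lin) !(linear_mapZ lin) aut1 in e.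
  polar_ring_using e.
have [tr_eq|tr_neq] := eqVneq (tr (phi x) - tr x) 0.
  move: e; rewrite tr_eq scale0r => /esym/eqP; rewrite scaler_eq0 (negbTE one_neq0).
  by rewrite orbF !subr_eq0 => /eqP->; move/eqP: tr_eq; rewrite subr_eq0 => /eqP->.
set k := (nrm (phi x) - nrm x) / (tr (phi x) - tr x).
have phix : phi x = k *: one by rewrite /k mulrC -scalerA -e scalerA mulVf ?scale1r.
have x_scalar : x = k *: one.
  case: phi_aut => _ [g phiK _] _.
  by apply: (can_inj phiK); rewrite (linear_mapZ lin) aut1.
by move/eqP: tr_neq; case; rewrite phix -x_scalar subrr.
Qed.

Lemma aut_tr x : tr (phi x) = tr x. Proof. by case: (aut_tr_nrm x). Qed.
Lemma aut_nrm x : nrm (phi x) = nrm x. Proof. by case: (aut_tr_nrm x). Qed.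
Lemma aut_polar x y : '[phi x, phi y] = '[x, y].
Proof. by rewrite /polar -(linear_mapD aut_linear) !aut_nrm. Qed.
Lemma aut_conj x : phi (conj x) = conj (phi x).
Proof. exact: linear_map_conj aut_linear aut1 (aut_tr x). Qed.

End Automorphism.

(** * Linear functionals and the polar form *)

Lemma span_ind (P : V -> Prop) (X : seq V) :
  P 0 -> (forall a x y, P x -> P y -> P (a *: x + y)) -> (forall x, x \in X -> P x) ->
  forall z, z \in <<X>>%VS -> P z.
Proof.
move=> P0 P_lin; elim: X => [|x X IHX] PX z; first by rewrite span_nil memv0 => /eqP->.
rewrite span_cons => /memv_addP[_ /vlineP[a ->] [y yX ->]].
apply: P_lin; first by apply: PX; rewrite mem_head.
by apply: IHX => // x' x'X; apply: PX; rewrite inE x'X orbT.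
Qed.

Definition linear_functional (f : V -> F) := forall a x y, f (a *: x + y) = a * f x + f y.

Lemma linear_functional_polar z : linear_functional (polar nrm z).
Proof. by move=> a x y; rewrite polarDr polarZr. Qed.

Lemma linear_functional_eq_span f g X : linear_functional f -> linear_functional g ->
  {in X, f =1 g} -> forall s, s \in <<X>>%VS -> f s = g s.
Proof.
move=> f_lin g_lin fg; have lin0 h : linear_functional h -> h 0 = 0.
  by move=> h_lin; apply: self_add_eq0; have := h_lin 1 0 0; rewrite scale1r addr0 mul1r.
by apply: span_ind => [|a x y fx fy|//]; rewrite ?lin0 // f_lin g_lin fx fy.
Qed.

Local Notation basisV := (vbasis (fullv : {vspace V})).

Lemma mem_span_basisV s : s \in <<basisV>>%VS.
Proof. by rewrite (span_basis (vbasisP fullv)) memvf. Qed.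

Lemma polar_basis_eq0 x : (forall i : 'I_(\dim {: V}), '[x, basisV`_i] = 0) -> x = 0.
Proof.
move=> x_orth; apply: polar_nondeg => s; have := mem_span_basisV s.
apply: (linear_functional_eq_span (g := fun=> 0) (linear_functional_polar x)).
  by move=> a ? ?; rewrite mulr0 addr0.
move=> _ /(nthP 0)[i i_lt <-]; rewrite size_tuple in i_lt.
exact: (x_orth (Ordinal i_lt)).
Qed.

Lemma polar_riesz f : linear_functional f -> exists z, forall s, '[z, s] = f s.
Proof.
move=> f_lin.
pose L z : 'rV[F]_(\dim {: V}) := \row_i '[z, basisV`_i].
have L_lin : linear L by move=> a x y; apply/rowP => i; rewrite !mxE polarDl polarZl.
pose Llin : {linear V -> 'rV[F]_(\dim {: V})} := HB.pack L (GRing.isLinear.Build _ _ _ _ L L_lin).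
have ker_L : lker (linfun Llin) == 0%VS.
  apply/lker0P => x y; rewrite !lfunE /= => /rowP Lxy; apply/eqP; rewrite -subr_eq0.
  by apply/eqP/polar_basis_eq0 => i; have := Lxy i; rewrite !mxE polarBl => ->; rewrite subrr.
have img_L : limg (linfun Llin) = fullv.
  apply/eqP; rewrite eqEdim subvf limg_dim_eq; last by rewrite (eqP ker_L) capv0.
  by rewrite dimvf dim_matrix mul1r leqnn.
have /memv_imgP[z _] : (\row_i f basisV`_i) \in limg (linfun Llin) by rewrite img_L memvf.
rewrite lfunE /= => /rowP Lz; exists z => s.
apply: (linear_functional_eq_span (linear_functional_polar z) f_lin _ (mem_span_basisV s)).
move=> _ /(nthP 0)[i i_lt <-]; rewrite size_tuple in i_lt.
by have := Lz (Ordinal i_lt); rewrite !mxE.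
Qed.

Lemma polar_witness x : x != 0 -> exists c, '[x, c] != 0.
Proof.
move=> x_neq0.
have [/existsP[i xi]|/existsPn x_orth] := boolP [exists i : 'I_(\dim {: V}), '[x, basisV`_i] != 0].
  by exists basisV`_i.
by move/eqP: x_neq0; case; apply: polar_basis_eq0 => i; apply/eqP; rewrite -[_ == _]negbK x_orth.
Qed.

Lemma polar_separate (U : {vspace V}) b : b \notin U ->
  exists z, {in U, forall a, '[z, a] = 0} /\ '[z, b] != 0.
Proof.
move=> b_notin; pose h s := s - projv U s.
have h_lin : linear h by move=> a x y; rewrite /h linearP /=; polar_ring.
have hb_neq0 : h b != 0.
  by apply: contra b_notin; rewrite subr_eq0 => /eqP->; rewrite memv_proj.
have [c hbc] := polar_witness hb_neq0.
have [z zP] : exists z, forall s, '[z, s] = '[h s, c].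
  by apply: polar_riesz => a x y; rewrite h_lin polarDl polarZl.
by exists z; split => [a aU|]; rewrite zP // /h projv_id // subrr polar0l.
Qed.

Lemma polar_orthogonal_nonzero (X : seq V) : (size X < \dim {: V})%N ->
  exists2 z, z != 0 & {in X, forall a, '[z, a] = 0}.
Proof.
move=> size_X; have /subvPn[b _ b_notin] : ~~ (fullv <= <<X>>)%VS.
  by apply: contraL size_X => /dimvS; rewrite dimvf -leqNgt => /leq_trans->; rewrite ?dim_span.
have [z [z_orth zb]] := polar_separate b_notin.
exists z; first by apply: contraNneq zb => ->; rewrite polar0l.
by move=> a aX; rewrite z_orth ?memv_span.
Qed.

(** * Cayley-Dickson doubling *)

Definition subalgebra (D : V -> Prop) :=
  [/\ D one, forall a x y, D x -> D y -> D (a *: x + y)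
    & forall x y, D x -> D y -> D (x ** y)].

Definition orthogonal (D : V -> Prop) u := forall d, D d -> '[u, d] = 0.

Section Subalgebra.
Variables (D : V -> Prop) (D_sub : subalgebra D).

Lemma subalg1 : D one. Proof. by case: D_sub. Qed.
Lemma subalgM x y : D x -> D y -> D (x ** y).
Proof. by case: D_sub => _ _ D_mul; apply: D_mul. Qed.
Lemma subalgP a x y : D x -> D y -> D (a *: x + y).
Proof. by case: D_sub => _ D_lin _; apply: D_lin. Qed.
Lemma subalg0 : D 0.
Proof. by have := subalgP (-1) subalg1 subalg1; rewrite scaleN1r addNr. Qed.
Lemma subalgD x y : D x -> D y -> D (x + y).
Proof. by move=> Dx Dy; have := subalgP 1 Dx Dy; rewrite scale1r. Qed.
Lemma subalgZ a x : D x -> D (a *: x).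
Proof. by move=> Dx; have := subalgP a Dx subalg0; rewrite addr0. Qed.
Lemma subalgB x y : D x -> D y -> D (x - y).
Proof. by move=> Dx Dy; rewrite -scaleN1r addrC; apply: subalgP. Qed.
Lemma subalg_conj x : D x -> D (conj x).
Proof. by move=> Dx; rewrite conjE; apply: subalgB => //; apply/subalgZ/subalg1. Qed.

Lemma tr_orth u : orthogonal D u -> tr u = 0.
Proof. by apply; apply: subalg1. Qed.
Lemma conj_orth u : orthogonal D u -> conj u = - u.
Proof. by move=> u_orth; rewrite conjE (tr_orth u_orth) scale0r sub0r. Qed.

Lemma mul_orth_comm u a : orthogonal D u -> D a -> u ** a = conj a ** u.
Proof.
move=> u_orth Da; have e := mul_sym a u.
rewrite (tr_orth u_orth) scale0r addr0 polarC u_orth // scale0r subr0 in e.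
rewrite conjE mulBx mulZx mul1x; polar_ring_using e.
Qed.

Variables (u : V) (u_orth : orthogonal D u).

Lemma orthogonal_mull d : D d -> orthogonal D (d ** u).
Proof.
by move=> Dd c Dc; rewrite polar_mull u_orth //; apply: subalgM => //; apply: subalg_conj.
Qed.

Lemma mulA_orth_l a d : D a -> D d -> a ** (d ** u) = (d ** a) ** u.
Proof.
move=> Da Dd; have e := mul_conjKr2 a (- u) d.
rewrite conjN (conj_orth u_orth) opprK mulxN mulNx polarNr polarC u_orth // oppr0 scale0r in e.
rewrite (mul_orth_comm (orthogonal_mull Dd) (subalg_conj Da)) conjK in e.
by apply/eqP; rewrite eq_sym -subr_eq0 e.
Qed.

Lemma mulA_orth_r b c : D c -> (b ** u) ** c = (b ** conj c) ** u.
Proof.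
move=> Dc; have e := mul_conjKr2 u (conj c) b.
rewrite conjK (conj_orth u_orth) mulxN (u_orth (subalg_conj Dc)) scale0r in e.
by apply/eqP; rewrite -subr_eq0 e.
Qed.

Lemma mul_orth_orth b d : D b -> D d ->
  (b ** u) ** (d ** u) = - (nrm u *: (conj d ** b)).
Proof.
move=> Db Dd; have e := mul_conjK2 (- (b ** u)) d u.
have bu_u : (- (b ** u)) ** u = nrm u *: b.
  by rewrite mulNx -mulxN -(conj_orth u_orth) mul_conjKr.
rewrite conjN (conj_orth (orthogonal_mull Db)) opprK bu_u mulxZ polarNl in e.
rewrite (orthogonal_mull Db Dd) oppr0 scale0r in e.
by apply/eqP; rewrite -subr_eq0 opprK e.
Qed.

Lemma cayley_dickson_mul a b c d : D a -> D b -> D c -> D d ->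
  (a + b ** u) ** (c + d ** u) =
  (a ** c - nrm u *: (conj d ** b)) + (d ** a + b ** conj c) ** u.
Proof.
move=> Da Db Dc Dd.
rewrite !mulDx !mulxD mulA_orth_l // mulA_orth_r // mul_orth_orth //.
polar_ring.
Qed.

End Subalgebra.

Definition double (D : V -> Prop) u z := exists a b, [/\ D a, D b & z = a + b ** u].

Lemma double_incl D u a : subalgebra D -> D a -> double D u a.
Proof. by move=> D_sub Da; exists a, 0; rewrite mul0x addr0; split => //; apply: subalg0. Qed.

Lemma double_subalgebra D u : subalgebra D -> orthogonal D u -> subalgebra (double D u).
Proof.
move=> D_sub u_orth; split.
- exact: double_incl (subalg1 D_sub).
- move=> c _ _ [a [b [Da Db ->]]] [a' [b' [Da' Db' ->]]].
  exists (c *: a + a'), (c *: b + b'); split; try exact: subalgP.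
  by rewrite mulDx mulZx; polar_ring.
- move=> _ _ [a [b [Da Db ->]]] [c [d [Dc Dd ->]]].
  rewrite (cayley_dickson_mul D_sub u_orth) //.
  exists (a ** c - nrm u *: (conj d ** b)), (d ** a + b ** conj c); split => //.
  + apply: subalgB => //; [|apply: subalgZ => //];
      by apply: subalgM => //; apply: subalg_conj.
  + by apply: subalgD => //; apply: subalgM => //; apply: subalg_conj.
Qed.

Lemma span_subalgebra D X : subalgebra D -> (forall x, x \in X -> D x) ->
  forall z, z \in <<X>>%VS -> D z.
Proof. by move=> D_sub; apply: span_ind; [exact: subalg0 D_sub|exact: subalgP D_sub]. Qed.

Lemma orthogonal_span D X u : (forall z, D z -> z \in <<X>>%VS) ->
  {in X, forall x, '[u, x] = 0} -> orthogonal D u.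
Proof.
move=> DX uX z /DX; move: z; apply: (@span_ind (fun z => '[u, z] = 0)) => [|a x y ux uy|//].
  exact: polar0r.
by rewrite polarDr polarZr ux uy mulr0 addr0.
Qed.

Definition morph_on (D D' : V -> Prop) f :=
  [/\ forall a, D a -> D' (f a),
      forall a b, D a -> D b -> f (a ** b) = f a ** f b
    & forall a, D a -> f (conj a) = conj (f a)].

Lemma double_morph D D' u u' f :
  subalgebra D -> subalgebra D' -> orthogonal D u -> orthogonal D' u' ->
  nrm u' = nrm u -> linear_map f -> morph_on D D' f ->
  (forall b, D b -> f (b ** u) = f b ** u') ->
  morph_on (double D u) (double D' u') f.
Proof.
move=> D_sub D'_sub u_orth u'_orth nrm_u' f_lin [fD fM f_conj] f_u.
have f_double a b : D a -> D b -> f (a + b ** u) = f a + f b ** u'.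
  by move=> Da Db; rewrite (linear_mapD f_lin) f_u.
split.
- by move=> _ [a [b [Da Db ->]]]; exists (f a), (f b); rewrite f_double //; split => //; apply: fD.
- move=> _ _ [a [b [Da Db ->]]] [c [d [Dc Dd ->]]].
  have Dcc := subalg_conj D_sub Dc; have Dcd := subalg_conj D_sub Dd.
  rewrite !f_double // (cayley_dickson_mul D_sub u_orth) //.
  rewrite (cayley_dickson_mul D'_sub u'_orth); try exact: fD.
  rewrite f_double; first last.
  + by apply: subalgD => //; apply: subalgM.
  + by apply: subalgB => //; [apply: subalgM|apply: subalgZ => //; apply: subalgM].
  rewrite (linear_mapB f_lin) (linear_mapZ f_lin) (linear_mapD f_lin).
  by rewrite !fM // !f_conj // nrm_u'.
- move=> _ [a [b [Da Db ->]]].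
  rewrite f_double // !conjD (conj_orth D_sub (orthogonal_mull D_sub u_orth Db)).
  rewrite (conj_orth D'_sub (orthogonal_mull D'_sub u'_orth (fD _ Db))).
  by rewrite (linear_mapD f_lin) (linear_mapN f_lin) f_u // f_conj.
Qed.

Lemma mulr_linear u : linear (mul ^~ u).
Proof. by move=> a x y; rewrite mulDx mulZx. Qed.

Definition rmul_linear u : {linear V -> V} :=
  HB.pack (mul ^~ u) (GRing.isLinear.Build F V V *:%R (mul ^~ u) (mulr_linear u)).
Definition rmul u : 'End(V) := linfun (rmul_linear u).
Lemma rmulE u x : rmul u x = x ** u. Proof. by rewrite lfunE. Qed.

Definition double_frame (B : seq V) u := B ++ [seq b ** u | b <- B].

Lemma double_sub_span D B u : (forall z, D z -> z \in <<B>>%VS) ->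
  forall z, double D u z -> z \in <<double_frame B u>>%VS.
Proof.
move=> DB _ [a [b [Da Db ->]]]; rewrite span_cat memv_add ?DB //.
move: b {Db}(DB b Db); apply: (@span_ind (fun b => b ** u \in <<_>>%VS)) => [|c x y xu yu|x xB].
- by rewrite mul0x mem0v.
- by rewrite mulDx mulZx memvD ?memvZ.
- by rewrite memv_span // map_f.
Qed.

Lemma double_frame_map f B B' u u' : size B = size B' ->
  map f (double_frame B u) = double_frame B' u' ->
  map f B = B' /\ {in B, forall b, f (b ** u) = f b ** u'}.
Proof.
move=> size_B; rewrite map_cat => /eqP; rewrite eqseq_cat ?size_map //.
case/andP=> /eqP fB; rewrite -fB -!map_comp => /eqP /eq_in_map fBu.
by split=> // b /fBu.
Qed.

Lemma linear_mulr_span f B u u' : linear_map f -> {in B, forall b, f (b ** u) = f b ** u'} ->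
  forall b, b \in <<B>>%VS -> f (b ** u) = f b ** u'.
Proof.
move=> f_lin fB; apply: (@span_ind (fun b => f (b ** u) = f b ** u')) => [|a x y fx fy|//].
  by rewrite !mul0x (linear_map0 f_lin) mul0x.
by rewrite mulDx mulZx !(linear_mapD f_lin) !(linear_mapZ f_lin) fx fy mulDx mulZx.
Qed.

Definition adjoin w z := exists a b : F, z = a *: one + b *: w.

Lemma adjoin_sub_span w z : adjoin w z -> z \in <<[:: one; w]>>%VS.
Proof. by case=> a [b ->]; rewrite memvD ?memvZ ?memv_span ?inE ?eqxx ?orbT. Qed.

Lemma adjoin_frame_sub w b : b \in [:: one; w] -> adjoin w b.
Proof.
rewrite !inE => /orP[]/eqP->; first by exists 1, 0; rewrite scale1r scale0r addr0.
by exists 0, 1; rewrite scale0r scale1r add0r.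
Qed.

Lemma mul_adjoin w a0 a1 b0 b1 :
  (a0 *: one + a1 *: w) ** (b0 *: one + b1 *: w) =
  (a0 * b0 - a1 * b1 * nrm w) *: one + (a0 * b1 + a1 * b0 + a1 * b1 * tr w) *: w.
Proof. rewrite !mulDx !mulxD !mulZx !mulxZ !mul1x !mulx1 mulxx; polar_ring. Qed.

Lemma adjoin_subalgebra w : subalgebra (adjoin w).
Proof.
split.
- by exists 1, 0; rewrite scale1r scale0r addr0.
- move=> c _ _ [x0 [x1 ->]] [y0 [y1 ->]].
  by exists (c * x0 + y0), (c * x1 + y1); polar_ring.
- by move=> _ _ [x0 [x1 ->]] [y0 [y1 ->]]; rewrite mul_adjoin; do 2 eexists.
Qed.

Lemma adjoin_morph w w' f : linear_map f -> f one = one -> f w = w' ->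
  tr w' = tr w -> nrm w' = nrm w -> morph_on (adjoin w) (adjoin w') f.
Proof.
move=> f_lin f1 fw tr_w' nrm_w'.
have f_adjoin a b : f (a *: one + b *: w) = a *: one + b *: w'.
  by rewrite (linear_mapD f_lin) !(linear_mapZ f_lin) f1 fw.
split.
- by move=> _ [a [b ->]]; rewrite f_adjoin; exists a, b.
- by move=> _ _ [a [b ->]] [c [d ->]]; rewrite mul_adjoin !f_adjoin mul_adjoin tr_w' nrm_w'.
- move=> _ [a [b ->]]; apply: linear_map_conj => //.
  by rewrite f_adjoin !trD !trZ tr_w'.
Qed.

Definition disc w := 4%:R * nrm w - tr w ^+ 2.

Lemma four_eq0 : 2 = 0 :> F -> 4%:R = 0 :> F.
Proof. by move=> two0; rewrite (_ : 4 = 2 * 2)%N // natrM two0 mul0r. Qed.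

(* disc w is the Gram determinant of (one, w). *)
Lemma adjoin_orth_eq0 w a b : disc w != 0 ->
  '[a *: one + b *: w, one] = 0 -> '[a *: one + b *: w, w] = 0 -> a = 0 /\ b = 0.
Proof.
move=> disc_neq0; rewrite !polarDl !polarZl -/(tr one) tr1 -/(tr w) (polarC one) -/(tr w).
rewrite polarxx => e1 e2.
have /eqP : a * disc w = 0.
  have -> : a * disc w = 2 * nrm w * (a * 2 + b * tr w) - tr w * (a * tr w + b * (2 * nrm w)).
    by rewrite /disc; ring.
  by rewrite e1 e2; ring.
have /eqP : b * disc w = 0.
  have -> : b * disc w = 2 * (a * tr w + b * (2 * nrm w)) - tr w * (a * 2 + b * tr w).
    by rewrite /disc; ring.
  by rewrite e1 e2; ring.
by rewrite !mulf_eq0 (negbTE disc_neq0) !orbF => /eqP-> /eqP->.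
Qed.

Definition nondegenerate_on (D : V -> Prop) :=
  forall a, D a -> (forall d, D d -> '[a, d] = 0) -> a = 0.

Lemma adjoin_nondegenerate w : disc w != 0 -> nondegenerate_on (adjoin w).
Proof.
move=> disc_neq0 _ [a [b ->]] orth_ab.
have adjoin_w : adjoin w w by exists 0, 1; rewrite scale0r scale1r add0r.
have [-> ->] := adjoin_orth_eq0 disc_neq0 (orth_ab _ (subalg1 (adjoin_subalgebra w)))
  (orth_ab w adjoin_w).
by rewrite !scale0r addr0.
Qed.

Lemma free_adjoin_frame w : disc w != 0 -> free [:: one; w].
Proof.
move=> disc_neq0; have coef_eq0 a b : a *: one + b *: w = 0 -> a = 0 /\ b = 0.
  by move=> e; apply: (adjoin_orth_eq0 disc_neq0); rewrite e polar0l.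
rewrite free_cons seq1_free span_seq1; apply/andP; split.
  apply/negP => /vlineP[c one_cw].
  have [/eqP] : 1 = 0 :> F /\ - c = 0 by apply: coef_eq0; rewrite scaleNr -one_cw scale1r subrr.
  by rewrite oner_eq0.
apply/eqP => w0.
have [_ /eqP] : (0 : F) = 0 /\ (1 : F) = 0 by apply: coef_eq0; rewrite w0 scale0r scaler0 addr0.
by rewrite oner_eq0.
Qed.

(** * Isometries and Witt's theorem *)

Definition isometry T := linear_map T /\ forall z, nrm (T z) = nrm z.

Lemma isometry_polar T x y : isometry T -> '[T x, T y] = '[x, y].
Proof. by case=> T_lin T_nrm; rewrite /polar -(linear_mapD T_lin) !T_nrm. Qed.

Definition reflection a z := z - ('[z, a] / nrm a) *: a.

Definition pair_frame x y := [:: one; x; y; x ** y].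

Definition pair_gram (nx ny tx ty pxy : F) (i j : nat) : F :=
  match i, j with
  | 0, 0 => 2 | 0, 1 => tx | 0, 2 => ty | 0, 3 => tx * ty - pxy
  | 1, 0 => tx | 1, 1 => 2 * nx | 1, 2 => pxy | 1, 3 => nx * ty
  | 2, 0 => ty | 2, 1 => pxy | 2, 2 => 2 * ny | 2, 3 => ny * tx
  | 3, 0 => tx * ty - pxy | 3, 1 => nx * ty | 3, 2 => ny * tx | 3, 3 => 2 * (nx * ny)
  | _, _ => 0 end.

Lemma polar_pair_frame x y i j : (i < 4)%N -> (j < 4)%N ->
  '[(pair_frame x y)`_i, (pair_frame x y)`_j] =
  pair_gram (nrm x) (nrm y) (tr x) (tr y) '[x, y] i j.
Proof.
have one_x z : '[one, z] = tr z by rewrite polarC.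
case: i => [|[|[|[|i]]]] // _; case: j => [|[|[|[|j]]]] // _;
  rewrite /= ?polarxx ?nrm1 ?nrmM ?one_x ?trM ?polar_mull_self ?polar_mulr_self -?/(tr _)
    ?trM ?mulr1 //.
all: by rewrite polarC ?polar_mull_self ?polar_mulr_self.
Qed.

Lemma division_anisotropic : division_algebra mul -> forall x, nrm x = 0 -> x = 0.
Proof.
move=> mul_div x nrm_x; apply/eqP; apply: contraT => x_neq0.
have [[g gK _] _] := mul_div x x_neq0.
have : x ** conj x = x ** 0 by rewrite mul_conjr mulx0 nrm_x scale0r.
move/(can_inj gK)/(congr1 conj); rewrite conjK conj0 => x0.
by rewrite x0 eqxx in x_neq0.
Qed.

Section Anisotropic.
Hypothesis nrm_anisotropic : forall x, nrm x = 0 -> x = 0.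

Lemma nrm_eq0 x : (nrm x == 0) = (x == 0).
Proof. by apply/eqP/eqP => [/nrm_anisotropic|->]; last exact: nrm0. Qed.

Lemma nrm_neq0 x : x != 0 -> nrm x != 0.
Proof. by rewrite nrm_eq0. Qed.

Lemma mul_eq0 x y : (x ** y == 0) = (x == 0) || (y == 0).
Proof. by rewrite -!nrm_eq0 nrmM mulf_eq0. Qed.

Lemma reflection_isometry a : a != 0 -> isometry (reflection a).
Proof.
rewrite -nrm_eq0 => a_neq0; split => [c x y|z].
  by rewrite /reflection polarDl polarZl; polar_ring.
by rewrite /reflection nrmD nrmN nrmZ polarNr polarZr polarC expr2 -mulrA mulfVK // addrK.
Qed.

Lemma reflection_id a z : '[z, a] = 0 -> reflection a z = z.
Proof. by move=> za; rewrite /reflection za mul0r scale0r subr0. Qed.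

Lemma reflection_swap g f : nrm g = nrm f -> g != f -> reflection (g - f) g = f.
Proof.
move=> nrm_gf g_neq_f; rewrite /reflection.
have gf_neq0 : nrm (g - f) != 0 by rewrite nrm_eq0 subr_eq0.
have -> : '[g, g - f] = nrm (g - f) by rewrite polarBr polarxx nrmD nrmN polarNr -nrm_gf; ring.
by rewrite divff // scale1r opprB addrC subrK.
Qed.

(* A composition of reflections; by anisotropy the families need not be free. *)
Lemma witt_extension k (e f : nat -> V) :
  (forall i j, (i < k)%N -> (j < k)%N -> '[e i, e j] = '[f i, f j]) ->
  (forall i, (i < k)%N -> nrm (e i) = nrm (f i)) ->
  exists T, isometry T /\ forall i, (i < k)%N -> T (e i) = f i.
Proof.
elim: k => [|k IHk] polar_ef nrm_ef; first by exists id; do !split.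
have [T [T_iso Te]] : exists T, isometry T /\ forall i, (i < k)%N -> T (e i) = f i.
  by apply: IHk => [i j ? ?|i ?]; [apply: polar_ef|apply: nrm_ef]; apply: ltnW.
have Te_lt i : (i < k.+1)%N -> i != k -> T (e i) = f i.
  by rewrite ltnS leq_eqVlt => /orP[/eqP->|/Te]; rewrite ?eqxx.
have [Tek|Tek] := eqVneq (T (e k)) (f k).
  by exists T; split => // i i_lt; have [->|] := eqVneq i k; last exact: Te_lt.
exists (reflection (T (e k) - f k) \o T); split.
  have [r_lin r_nrm] : isometry (reflection (T (e k) - f k)).
    by apply: reflection_isometry; rewrite subr_eq0.
  split=> [c x y|z] /=; first by rewrite (proj1 T_iso) r_lin.
  by rewrite r_nrm (proj2 T_iso).
move=> i i_lt /=; have [->|i_neq] := eqVneq i k.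
  by apply: reflection_swap; rewrite ?(proj2 T_iso) ?nrm_ef.
rewrite (Te_lt i) // reflection_id // polarBr -{1}(Te_lt i i_lt i_neq) isometry_polar //.
by rewrite polar_ef ?subrr.
Qed.

Lemma isometry_of_pair x y x' y' :
  nrm x' = nrm x -> nrm y' = nrm y -> tr x' = tr x -> tr y' = tr y -> '[x', y'] = '[x, y] ->
  exists T, [/\ isometry T, T one = one, T x = x', T y = y' & T (x ** y) = x' ** y'].
Proof.
move=> nx ny tx ty pxy.
have [T [T_iso Te]] : exists T, isometry T /\
    forall i, (i < 4)%N -> T (pair_frame x y)`_i = (pair_frame x' y')`_i.
  apply: witt_extension => [i j i4 j4|i i4].
    by rewrite !polar_pair_frame // nx ny tx ty pxy.
  by case: i i4 => [|[|[|[|i]]]] //= _; rewrite ?nrmM ?nx ?ny.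
by exists T; split => //; [apply: (Te 0%N)|apply: (Te 1%N)|apply: (Te 2%N)|apply: (Te 3%N)].
Qed.

Section Double.
Variables (D : V -> Prop) (u : V).
Hypotheses (D_sub : subalgebra D) (D_nondeg : nondegenerate_on D).
Hypotheses (u_orth : orthogonal D u) (u_neq0 : u != 0).

Lemma double_free a b : D a -> D b -> a + b ** u = 0 -> a = 0 /\ b = 0.
Proof.
move=> Da Db ab0; have a_eq : a = - (b ** u) by apply/eqP; rewrite -subr_eq0 opprK ab0.
have a0 : a = 0.
  by apply: D_nondeg => // d Dd; rewrite a_eq polarNl (orthogonal_mull D_sub u_orth Db Dd) oppr0.
split => //; apply/eqP; move/eqP: ab0.
by rewrite a0 add0r mul_eq0 (negbTE u_neq0) orbF.
Qed.

Lemma double_nondegenerate : nondegenerate_on (double D u).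
Proof.
move=> _ [a [b [Da Db ->]]] orth_ab.
have a0 : a = 0.
  apply: D_nondeg => // d Dd; have := orth_ab d (double_incl u D_sub Dd).
  by rewrite polarDl (orthogonal_mull D_sub u_orth Db Dd) addr0.
have b0 : b = 0.
  apply: D_nondeg => // d Dd.
  have du : double D u (d ** u) by exists 0, d; rewrite add0r; split => //; apply: subalg0.
  have /eqP := orth_ab _ du; rewrite a0 add0r polarMr mulf_eq0 nrm_eq0 (negbTE u_neq0).
  by move/eqP.
by rewrite a0 b0 mul0x addr0.
Qed.

Lemma double_frame_sub (B : seq V) : (forall b, b \in B -> D b) ->
  forall z, z \in double_frame B u -> double D u z.
Proof.
move=> DB z; rewrite mem_cat => /orP[/DB Dz|/mapP[b /DB Db ->]].
  exact: double_incl.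
by exists 0, b; rewrite add0r; split => //; apply: subalg0.
Qed.

Lemma free_double_frame (B : seq V) :
  (forall b, b \in B -> D b) -> free B -> free (double_frame B u).
Proof.
move=> DB free_B; rewrite /double_frame -(eq_map (rmulE u)) cat_free free_B /=.
have ker_u : lker (rmul u) == 0%VS.
  apply/lker0P => x y; rewrite !rmulE => /eqP; rewrite -subr_eq0 -mulBx mul_eq0.
  by rewrite (negbTE u_neq0) orbF subr_eq0 => /eqP.
apply/andP; split.
  by rewrite /free -limg_span limg_dim_eq ?size_map ?(eqP free_B) // (eqP ker_u) capv0.
apply/directv_addP/eqP; rewrite -subv0; apply/subvP => z /memv_capP[zB].
rewrite -limg_span => /memv_imgP[b bB]; rewrite rmulE => z_bu.
have DzB := span_subalgebra D_sub DB.
have [-> _] : z = 0 /\ - b = 0.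
  by apply: double_free; rewrite ?mulNx -?z_bu ?subrr //; apply: DzB; rewrite ?memvN.
exact: mem0v.
Qed.

End Double.

Lemma disc_eq0_char2 x : disc x = 0 -> x \notin <[one]>%VS -> 2 = 0 :> F /\ tr x = 0.
Proof.
move=> disc0 x_notin.
have two0 : 2 = 0 :> F.
  apply/eqP; apply: contraNT x_notin => two_neq0; apply/vlineP; exists (tr x / 2).
  have nrm_x : nrm x = tr x ^+ 2 / 4%:R.
    have four_neq0 : 4%:R != 0 :> F by rewrite (_ : 4 = 2 * 2)%N // natrM mulf_neq0.
    by move/eqP: disc0; rewrite subr_eq0 => /eqP <-; field.
  apply/eqP; rewrite -subr_eq0 -nrm_eq0 nrmD nrmN nrmZ nrm1 polarNr polarZr -/(tr x) nrm_x.
  have four : 4%:R = 2 * 2 :> F by rewrite -natrM.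
  by apply/eqP; rewrite four; field; rewrite two_neq0 four mulf_neq0.
split => //; move/eqP: disc0; rewrite /disc four_eq0 // mul0r sub0r oppr_eq0 expf_eq0 /=.
by move/eqP.
Qed.

Lemma one_notin_span_mul x y : tr x = 0 -> x \notin <[one]>%VS -> y \notin <<[:: one; x]>>%VS ->
  one \notin <<[:: x; y; x ** y]>>%VS.
Proof.
move=> tr_x x_notin y_notin; apply/negP => /coord_span.
rewrite !big_ord_recl big_ord0 addr0 /=.
set al := coord _ _ _; set be := coord _ _ _; set ga := coord _ _ _ => one_eq.
have xx : x ** x = - (nrm x *: one) by rewrite mulxx tr_x scale0r sub0r.
have x_xy : x ** (x ** y) = - (nrm x *: y).
  by rewrite -mul_conjK conjE tr_x scale0r sub0r mulNx opprK.
(* multiply one_eq on the left by x, then eliminate x ** y using one_eq *)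
have y_eq : (be ^+ 2 + ga ^+ 2 * nrm x) *: y = (be - al * ga * nrm x) *: one - (ga + al * be) *: x.
  have := congr1 (mul x) one_eq; rewrite mulx1 !mulxD !mulxZ xx x_xy => e.
  have {}e := congr2 (fun a b => ga *: a - be *: b) e one_eq; polar_ring_using e.
have [k0|k_neq0] := eqVneq (be ^+ 2 + ga ^+ 2 * nrm x) 0; last first.
  move/negP: y_notin; apply; rewrite -[_ \in _]orFb -(negbTE k_neq0) -rpredZeq y_eq.
  by rewrite memvB ?memvZ ?memv_span ?inE ?eqxx ?orbT.
have bg0 : be *: one + ga *: x = 0.
  apply/eqP; rewrite -nrm_eq0 nrmD !nrmZ nrm1 polarZl polarZr (polarC one) -/(tr x) tr_x.
  by rewrite !mulr0 addr0 mulr1 k0.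
move/negP: x_notin; apply.
have [ga0|ga_neq0] := eqVneq ga 0; last first.
  rewrite -[_ \in _]orFb -(negbTE ga_neq0) -rpredZeq.
  by move/eqP: bg0; rewrite addrC addr_eq0 => /eqP->; rewrite memvN memvZ ?memv_line.
move/eqP: bg0; rewrite ga0 scale0r addr0 scaler_eq0 (negbTE one_neq0) orbF => /eqP be0.
move: one_eq; rewrite be0 ga0 !scale0r !addr0 => one_eq.
have al_neq0 : al != 0 by apply: contra_eq_neq one_eq => ->; rewrite scale0r.
by rewrite -[_ \in _]orFb -(negbTE al_neq0) -rpredZeq -one_eq memv_line.
Qed.

Lemma two_local_linear f : two_local_automorphism mul f -> linear_map f.
Proof.
move=> f_2loc a x y.
have f_nrm z : nrm (f z) = nrm z by have [phi [phi_aut -> _]] := f_2loc z z; apply: aut_nrm.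
have f_polar z1 z2 : '[f z1, f z2] = '[z1, z2].
  by have [phi [phi_aut -> ->]] := f_2loc z1 z2; apply: aut_polar.
apply/eqP; rewrite -subr_eq0 -nrm_eq0 nrmD nrmN nrmD nrmZ polarNr polarDr polarZr polarZl !f_polar.
rewrite !f_nrm nrmD nrmZ !polarDl !polarZl !polarxx (polarC y x); apply/eqP; ring.
Qed.

(** * Automorphisms exchanging basic triples *)

Section Octonion.
Hypothesis dimV : \dim {: V} = 8%N.

Definition basic_triple w v u :=
  [/\ disc w != 0, v != 0, u != 0, '[v, one] = 0 /\ '[v, w] = 0
    & [/\ '[u, one] = 0, '[u, w] = 0, '[u, v] = 0 & '[u, w ** v] = 0]].

Lemma basic_triple_orth w v u : basic_triple w v u ->
  {in [:: one; w], forall x, '[v, x] = 0} /\ {in double_frame [:: one; w] v, forall x, '[u, x] = 0}.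
Proof.
case=> _ _ _ [v1 vw] [u1 uw uv uwv]; split=> x.
  by rewrite !inE => /orP[]/eqP->.
by rewrite /double_frame /= mul1x !inE => /or4P[]/eqP->.
Qed.

Definition cd_frame w v u := double_frame (double_frame [:: one; w] v) u.

Section BasicTriple.
Variables w v u : V.
Hypotheses (disc_w : disc w != 0) (v_neq0 : v != 0) (u_neq0 : u != 0).
Hypotheses (v_orth : {in [:: one; w], forall x, '[v, x] = 0}).
Hypotheses (u_orth : {in double_frame [:: one; w] v, forall x, '[u, x] = 0}).

Lemma quaternion_sub_span z :
  double (adjoin w) v z -> z \in <<double_frame [:: one; w] v>>%VS.
Proof. exact/double_sub_span/adjoin_sub_span. Qed.

Lemma adjoin_orthogonal : orthogonal (adjoin w) v.
Proof. by apply: orthogonal_span v_orth => z; apply: adjoin_sub_span. Qed.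

Lemma quaternion_subalgebra : subalgebra (double (adjoin w) v).
Proof. exact: double_subalgebra (adjoin_subalgebra w) adjoin_orthogonal. Qed.

Lemma quaternion_orthogonal : orthogonal (double (adjoin w) v) u.
Proof. by apply: orthogonal_span u_orth => z; apply: quaternion_sub_span. Qed.

Lemma quaternion_frame_sub b :
  b \in double_frame [:: one; w] v -> double (adjoin w) v b.
Proof. by move=> bB; apply: (double_frame_sub (adjoin_subalgebra w) (@adjoin_frame_sub w) bB). Qed.

Lemma free_cd_frame : free (cd_frame w v u).
Proof.
have adjoin_nd := adjoin_nondegenerate disc_w.
have Q_nd := double_nondegenerate (adjoin_subalgebra w) adjoin_nd adjoin_orthogonal v_neq0.
apply: (free_double_frame quaternion_subalgebra Q_nd quaternion_orthogonal u_neq0).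
  exact: quaternion_frame_sub.
apply: (free_double_frame (adjoin_subalgebra w) adjoin_nd adjoin_orthogonal v_neq0).
  exact: adjoin_frame_sub.
exact: free_adjoin_frame.
Qed.

Lemma span_cd_frame : <<cd_frame w v u>>%VS = fullv.
Proof.
apply/eqP; rewrite eqEdim subvf (eqP free_cd_frame) dimV.
by rewrite /cd_frame /double_frame !size_cat !size_map.
Qed.

Lemma cd_frame_double z : double (double (adjoin w) v) u z.
Proof.
have O_sub := double_subalgebra quaternion_subalgebra quaternion_orthogonal.
apply: (@span_subalgebra _ (cd_frame w v u) O_sub); last by rewrite span_cd_frame memvf.
by move=> b bB; apply: (@double_frame_sub _ u quaternion_subalgebra _ quaternion_frame_sub b bB).
Qed.

End BasicTriple.

Lemma basic_triple_aut w v u w' v' u' :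
  basic_triple w v u -> basic_triple w' v' u' ->
  tr w' = tr w -> nrm w' = nrm w -> nrm v' = nrm v -> nrm u' = nrm u ->
  exists phi, [/\ automorphism mul phi, phi w = w', phi v = v' & phi u = u'].
Proof.
move=> triple triple' tr_w nrm_w nrm_v nrm_u.
have [v_orth u_orth] := basic_triple_orth triple.
have [v'_orth u'_orth] := basic_triple_orth triple'.
case: triple => disc_w v_neq0 u_neq0 _ _; case: triple' => disc_w' v'_neq0 u'_neq0 _ _.
have [f [f_bij fX]] : exists f : 'End(V), bijective f /\ map f (cd_frame w v u) = cd_frame w' v' u'.
  apply: basis_lfun; rewrite ?free_cd_frame ?span_cd_frame //.
have f_lin : linear_map f by move=> a x y; rewrite linearP.
have [fQ f_u] := double_frame_map (B := double_frame [:: one; w] v)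
  (B' := double_frame [:: one; w'] v') erefl fX.
have [fB f_v] := double_frame_map (B := [:: one; w]) (B' := [:: one; w']) erefl fQ.
case: fB => f1 fw.
have f_morph : morph_on (double (double (adjoin w) v) u) (double (double (adjoin w') v') u') f.
  apply: (double_morph (quaternion_subalgebra v_orth) (quaternion_subalgebra v'_orth)
    (quaternion_orthogonal u_orth) (quaternion_orthogonal u'_orth) nrm_u f_lin).
    apply: (double_morph (adjoin_subalgebra w) (adjoin_subalgebra w')
      (adjoin_orthogonal v_orth) (adjoin_orthogonal v'_orth) nrm_v f_lin).
      exact: adjoin_morph f_lin f1 fw tr_w nrm_w.
    by move=> b /adjoin_sub_span; apply: linear_mulr_span.
  by move=> b /quaternion_sub_span; apply: linear_mulr_span.
exists f; split => //.
- split=> //; case: f_morph => _ fM _ x y; apply: fM; exact: cd_frame_double.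
- by have := f_v one; rewrite mul1x f1 mul1x; apply; rewrite mem_head.
- by have := f_u one; rewrite mul1x f1 mul1x; apply; rewrite mem_head.
Qed.

Lemma orthogonal_pair_aut w v w' v' :
  disc w != 0 -> v != 0 -> '[v, one] = 0 -> '[v, w] = 0 -> '[v', one] = 0 -> '[v', w'] = 0 ->
  tr w' = tr w -> nrm w' = nrm w -> nrm v' = nrm v ->
  exists phi, [/\ automorphism mul phi, phi w = w' & phi v = v'].
Proof.
move=> disc_w v_neq0 v1 vw v'1 v'w' tr_w nrm_w nrm_v.
have [u u_neq0 u_orth] : exists2 u, u != 0 & {in [:: one; w; v; w ** v], forall x, '[u, x] = 0}.
  by apply: polar_orthogonal_nonzero; rewrite dimV.
have u_orth_at x : x \in [:: one; w; v; w ** v] -> '[u, x] = 0 by apply: u_orth.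
have tr_v : tr v' = tr v by rewrite /tr v1 v'1.
have wv : '[w', v'] = '[w, v] by rewrite polarC (polarC w) vw v'w'.
have [T [T_iso T1 Tw Tv Twv]] := isometry_of_pair nrm_w nrm_v tr_w tr_v wv.
have T_orth x : x \in [:: one; w; v; w ** v] -> '[T u, T x] = 0.
  by move=> xX; rewrite isometry_polar // u_orth_at.
have triple' : basic_triple w' v' (T u).
  split; rewrite -?nrm_eq0 ?(proj2 T_iso) ?nrm_v ?nrm_eq0 //; first by rewrite /disc tr_w nrm_w.
  by split; [rewrite -T1|rewrite -Tw|rewrite -Tv|rewrite -Twv]; apply: T_orth;
    rewrite !inE eqxx ?orbT.
have triple : basic_triple w v u.
  by split => //; split; apply: u_orth_at; rewrite !inE eqxx ?orbT.
have [phi [phi_aut phi_w phi_v _]] :=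
  basic_triple_aut triple triple' tr_w nrm_w nrm_v (proj2 T_iso u).
by exists phi.
Qed.

(** * Local automorphisms *)

Section LocalAutomorphism.
Variable psi : V -> V.
Hypotheses (psi_lin : linear_map psi) (psi_local : local_automorphism mul psi).

Lemma local_aut1 : psi one = one.
Proof. by have [phi [phi_aut ->]] := psi_local.2 one; apply: aut1. Qed.
Lemma local_aut_nrm z : nrm (psi z) = nrm z.
Proof. by have [phi [phi_aut ->]] := psi_local.2 z; apply: aut_nrm. Qed.
Lemma local_aut_polar x y : '[psi x, psi y] = '[x, y].
Proof. by apply: isometry_polar; split => //; apply: local_aut_nrm. Qed.
Lemma local_aut_tr x : tr (psi x) = tr x.
Proof. by rewrite /tr -{1}local_aut1 local_aut_polar. Qed.

Definition aut_agree x y := exists phi, [/\ automorphism mul phi, phi x = psi x & phi y = psi y].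

Lemma aut_agree_sym x y : aut_agree x y -> aut_agree y x.
Proof. by case=> phi [? ? ?]; exists phi. Qed.

Lemma aut_agree_span x y : y \in <<[:: one; x]>>%VS -> aut_agree x y.
Proof.
have [phi [phi_aut phi_x]] := psi_local.2 x; move=> /coord_span->; exists phi; split => //.
rewrite !big_ord_recl big_ord0 /= !addr0 (linear_mapD psi_lin) !(linear_mapZ psi_lin).
have phi_lin := aut_linear phi_aut.
by rewrite (linear_mapD phi_lin) !(linear_mapZ phi_lin) aut1 // local_aut1 phi_x.
Qed.

Lemma aut_agree_disc x y : disc x != 0 -> y \notin <<[:: one; x]>>%VS -> aut_agree x y.
Proof.
move=> disc_x y_notin.
(* al *: one + be *: x is the orthogonal projection of y on F one + F x. *)
pose al := (2 * nrm x * tr y - tr x * '[y, x]) / disc x.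
pose be := (2 * '[y, x] - tr x * tr y) / disc x.
pose v := y - (al *: one + be *: x).
have v1 : '[v, one] = 0.
  by rewrite /v polarBl polarDl !polarZl -/(tr one) tr1 -/(tr y) -/(tr x) /al /be /disc; field.
have vx : '[v, x] = 0.
  by rewrite /v polarBl polarDl !polarZl polarxx (polarC one) -/(tr x) /al /be /disc; field.
have v_neq0 : v != 0.
  apply: contraNneq y_notin => /eqP; rewrite subr_eq0 => /eqP->.
  by apply/adjoin_sub_span; exists al, be.
have psi_v1 : '[psi v, one] = 0 by rewrite -local_aut1 local_aut_polar.
have psi_vx : '[psi v, psi x] = 0 by rewrite local_aut_polar.
have [phi [phi_aut phi_x phi_v]] := orthogonal_pair_aut disc_x v_neq0 v1 vx psi_v1 psi_vx
  (local_aut_tr x) (local_aut_nrm x) (local_aut_nrm v).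
have y_eq : y = v + (al *: one + be *: x) by rewrite subrK.
exists phi; split => //; clearbody v; rewrite y_eq.
rewrite !(linear_mapD (aut_linear phi_aut)) !(linear_mapZ (aut_linear phi_aut)) aut1 //.
by rewrite !(linear_mapD psi_lin) !(linear_mapZ psi_lin) local_aut1 phi_x phi_v.
Qed.

Lemma aut_agree_char2_polar x y : 2 = 0 :> F -> tr x = 0 -> tr y = 0 -> '[x, y] != 0 ->
  aut_agree x y.
Proof.
move=> two0 tr_x tr_y xy_neq0.
have x_neq0 : x != 0 by apply: contraNneq xy_neq0 => ->; rewrite polar0l.
have tr_xy : tr (x ** y) = - '[x, y] by rewrite trM tr_x mul0r sub0r.
have disc_xy : disc (x ** y) != 0.
  by rewrite /disc four_eq0 // mul0r sub0r tr_xy sqrrN oppr_eq0 expf_eq0.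
have x1 : '[x, one] = 0 by [].
have x_xy : '[x, x ** y] = 0 by rewrite polar_mull_self tr_y mulr0.
have psi_x1 : '[psi x, one] = 0 by rewrite -/(tr _) local_aut_tr.
have psi_x_xy : '[psi x, psi x ** psi y] = 0 by rewrite polar_mull_self local_aut_tr tr_y mulr0.
have tr_psi_xy : tr (psi x ** psi y) = tr (x ** y).
  by rewrite !trM !local_aut_tr local_aut_polar.
have nrm_psi_xy : nrm (psi x ** psi y) = nrm (x ** y) by rewrite !nrmM !local_aut_nrm.
have [phi [phi_aut phi_xy phi_x]] := orthogonal_pair_aut disc_xy x_neq0 x1 x_xy psi_x1 psi_x_xy
  tr_psi_xy nrm_psi_xy (local_aut_nrm x).
exists phi; split => //; apply: (scalerI (nrm_neq0 x_neq0)).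
(* y is recovered from x and x ** y *)
have := congr1 phi (mul_conjK x y).
rewrite autM // aut_conj // phi_x phi_xy (linear_mapZ (aut_linear phi_aut)) => <-.
by rewrite mul_conjK local_aut_nrm.
Qed.

Lemma aut_agree_char2_orth x y : 2 = 0 :> F -> tr x = 0 -> tr y = 0 -> '[x, y] = 0 ->
  x \notin <[one]>%VS -> y \notin <<[:: one; x]>>%VS -> aut_agree x y.
Proof.
move=> two0 tr_x tr_y xy x_notin y_notin.
(* disc w = - tr w ^+ 2 in characteristic 2, hence the condition '[w, one] != 0 *)
have [w [w_orth w1]] := polar_separate (one_notin_span_mul tr_x x_notin y_notin).
have [wx wy wxy] : [/\ '[w, x] = 0, '[w, y] = 0 & '[w, x ** y] = 0].
  by split; apply: w_orth; rewrite memv_span // !inE eqxx ?orbT.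
have [T [T_iso T1 Tx Ty Txy]] := isometry_of_pair (local_aut_nrm x) (local_aut_nrm y)
  (local_aut_tr x) (local_aut_tr y) (local_aut_polar x y).
have x_neq0 : x != 0 by apply: contraNneq x_notin => ->; rewrite mem0v.
have y_neq0 : y != 0 by apply: contraNneq y_notin => ->; rewrite mem0v.
have disc_w : disc w != 0.
  by rewrite /disc four_eq0 // mul0r sub0r oppr_eq0 expf_eq0.
have triple : basic_triple w x y.
  split=> //; first by split; rewrite // polarC.
  by split; [|rewrite polarC|rewrite polarC|rewrite polar_rotate].
have psi_x1 : '[psi x, one] = 0 by rewrite -/(tr _) local_aut_tr.
have psi_y1 : '[psi y, one] = 0 by rewrite -/(tr _) local_aut_tr.
have tr_Tw : tr (T w) = tr w by rewrite /tr -{1}T1 isometry_polar.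
have triple' : basic_triple (T w) (psi x) (psi y).
  split.
  - by rewrite /disc tr_Tw (proj2 T_iso).
  - by rewrite -nrm_eq0 local_aut_nrm nrm_eq0.
  - by rewrite -nrm_eq0 local_aut_nrm nrm_eq0.
  - by split; rewrite // -Tx isometry_polar // polarC.
  split=> //; first by rewrite -Ty isometry_polar // polarC.
    by rewrite local_aut_polar polarC.
  rewrite polar_rotate ?local_aut_polar // -?/(tr _) ?local_aut_tr //.
  by rewrite -Txy isometry_polar.
have [phi [phi_aut _ phi_x phi_y]] :=
  basic_triple_aut triple triple' tr_Tw (proj2 T_iso w)
    (local_aut_nrm x) (local_aut_nrm y).
by exists phi.
Qed.

Lemma local_aut_agree x y : aut_agree x y.
Proof.
have [x_one|x_notin] := boolP (x \in <[one]>%VS).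
  apply/aut_agree_sym/aut_agree_span; move: x_one; apply: subvP.
  by rewrite span_cons addvSl.
have [y_span|y_notin] := boolP (y \in <<[:: one; x]>>%VS); first exact: aut_agree_span.
have [disc_x|disc_x] := eqVneq (disc x) 0; last exact: aut_agree_disc.
have x_notin' := span2_exchange x_notin y_notin.
have [disc_y|disc_y] := eqVneq (disc y) 0; last exact/aut_agree_sym/aut_agree_disc.
have y_notin_one : y \notin <[one]>%VS.
  by apply: contra y_notin; apply: subvP; rewrite span_cons addvSl.
have [two0 tr_x] := disc_eq0_char2 disc_x x_notin.
have [_ tr_y] := disc_eq0_char2 disc_y y_notin_one.
have [xy0|xy_neq0] := eqVneq '[x, y] 0.
  exact: aut_agree_char2_orth.
exact: aut_agree_char2_polar.
Qed.

Lemma local_aut_two_local : two_local_automorphism mul psi.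
Proof. by move=> x y; have [phi [phi_aut <- <-]] := local_aut_agree x y; exists phi. Qed.

End LocalAutomorphism.

End Octonion.

End Anisotropic.

End CompositionAlgebra.

Theorem theorem4p5 (F : fieldType) (V : vectType F) (mul : V -> V -> V)
    (one : V) (n : V -> F) :
  division_cayley_algebra mul one n ->
  (forall psi : V -> V, local_automorphism mul psi -> two_local_automorphism mul psi) /\
  (forall D : V -> V, local_automorphism mul D <-> two_local_automorphism mul D).
Proof.
case=> [[[dimV mul_bil] mul1 nrm_quad nrmM nondeg] mul_div].
have one_neq0 : one != 0 by apply: (one_neq0_dim mul_bil mul1); rewrite dimV.
have aniso := division_anisotropic mul_bil mul1 nrm_quad nrmM nondeg one_neq0 mul_div.
have local_2local psi : local_automorphism mul psi -> two_local_automorphism mul psi.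
  by move=> psi_loc; apply: (local_aut_two_local mul_bil mul1 nrm_quad nrmM nondeg one_neq0
    aniso dimV psi_loc.1 psi_loc).
split=> // D; split; first exact: local_2local.
move=> D_2loc; split.
  exact: (two_local_linear mul_bil mul1 nrm_quad nrmM nondeg one_neq0 aniso D_2loc).
by move=> x; have [phi [phi_aut -> _]] := D_2loc x x; exists phi.
Qed.
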